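(* Let $s_\theta$ be the Sturmian word of irrational slope $\theta\in(0,1)$, let $1\le k\le m$, let $P_k=(p_1,\dots,p_k)$ be an ordered partition of $m$, and let $s_0=0$, $s_\ell=p_1+\dots+p_\ell$ ($1\le\ell\le k$). Let $0=q'_0<q'_1<\dots<q'_k$ be the $k+1$ points $\{-s_0\theta\},\{-s_1\theta\},\dots,\{-s_k\theta\}$ arranged in increasing order, and set $q'_{k+1}=1$. Let $\lambda_0,\dots,\lambda_k$ be the $k+1$ varieties of $\mathcal{L}_{(m,k)}$ listed in the order inherited from the lexicographic order of the underlying factors. Then for each $0\le j\le k$, a factor $u\in\mathcal{L}_m$ belongs (as a partitioned factor) to $\lambda_j$ if and only if $J_u\subseteq[q'_j,q'_{j+1})$; equivalently, the occurrence of a length-$m$ factor at position $n$ is of variety $\lambda_j$ iff $\{n\theta\}\in[q'_j,q'_{j+1})$. Consequently $Fr(\lambda_j)=q'_{j+1}-q'_j$.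
   Context: For irrational $\theta\in(0,1)$, $s_\theta=s_0s_1\cdots$ is the infinite word over $\{a<b\}$ with $s_n=a$ if $\{n\theta\}\in I_a=[0,1-\theta)$ and $s_n=b$ if $\{n\theta\}\in I_b=[1-\theta,1)$, $\{x\}$ the fractional part. $\mathcal{L}_m$ is the set of factors of length $m$. $\mathcal{L}_{(m,k)}$ is the set of factorizations $u=u_1\cdots u_k$, $|u_i|=p_i$, $u\in\mathcal{L}_m$; the height profile is $\langle|u_1|_b,\dots,|u_k|_b\rangle$, and varieties are classes of equal height profile; each variety consists of lexicographically consecutive factors, which gives the inherited order. $R(x)=\{x+\theta\}$ on the circle $[0,1)$; for a factor $u=r_0\cdots r_{m-1}$, $J_u=\bigcap_{i=0}^{m-1}R^{-i}(I_{r_i})$ ($I_r=I_a$ or $I_b$ as $r=a$ or $b$), and $u$ occurs at position $n$ iff $\{n\theta\}\in J_u$. The frequency of a variety is $Fr(\lambda)=\lim_{N\to\infty}\mu_N/N$, where $\mu_N$ is the number of occurrences in the length-$N$ prefix of $s_\theta$ of length-$m$ factors whose $P_k$-partitioned form belongs to $\lambda$. *)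

From Stdlib Require Import Reals List Arith ZArith.
Open Scope R_scope.

(* Letters: false = a, true = b, with a < b. *)

Definition irrational (x : R) : Prop :=
  forall (p q : Z), (q <> 0)%Z -> x <> IZR p / IZR q.

Definition fracR (x : R) : R := frac_part x.

Definition inI (theta : R) (r : bool) (x : R) : Prop :=
  if r then 1 - theta <= x < 1 else 0 <= x < 1 - theta.

Definition sturm (theta : R) (n : nat) : bool :=
  if Rlt_dec (fracR (INR n * theta)) (1 - theta) then false else true.

Definition factorAt (theta : R) (m n : nat) : list bool :=
  map (sturm theta) (seq n m).

Definition inLang (theta : R) (m : nat) (u : list bool) : Prop :=
  exists n : nat, u = factorAt theta m n.

Definition countB (u : list bool) : nat :=
  length (filter (fun c : bool => c) u).

Fixpoint heightProfile (P : list nat) (u : list bool) : list nat :=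
  match P with
  | nil => nil
  | p :: P' => countB (firstn p u) :: heightProfile P' (skipn p u)
  end.

Fixpoint lexlt (u v : list bool) : Prop :=
  match u, v with
  | nil, nil => False
  | nil, _ :: _ => True
  | _ :: _, nil => False
  | x :: u', y :: v' => (x = false /\ y = true) \/ (x = y /\ lexlt u' v')
  end.

Definition orderedPartition (m : nat) (P : list nat) : Prop :=
  (forall p, In p P -> (1 <= p)%nat) /\ fold_right Nat.add 0%nat P = m.

Definition partialSum (P : list nat) (l : nat) : nat :=
  fold_right Nat.add 0%nat (firstn l P).

Definition rot (theta x : R) : R := fracR (x + theta).

Definition inJ (theta : R) (u : list bool) (x : R) : Prop :=
  0 <= x < 1 /\
  forall i : nat, (i < length u)%nat ->
    inI theta (nth i u false) (Nat.iter i (rot theta) x).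

Definition J_sub (theta : R) (u : list bool) (a b : R) : Prop :=
  forall x, inJ theta u x -> a <= x < b.

Definition sortedPoints (theta : R) (P : list nat) (q : nat -> R) : Prop :=
  let k := length P in
  (forall j, (j < k)%nat -> q j < q (S j)) /\
  (forall j, (j <= k)%nat -> exists l, (l <= k)%nat /\
        q j = fracR (- (INR (partialSum P l) * theta))) /\
  (forall l, (l <= k)%nat -> exists j, (j <= k)%nat /\
        q j = fracR (- (INR (partialSum P l) * theta))) /\
  q (S k) = 1.

(* h_0, ..., h_k : the height profiles of the k+1 varieties of L_(m,k),
   listed in the order inherited from the lexicographic order of factors *)
Definition varietyListing (theta : R) (m : nat) (P : list nat)
    (h : nat -> list nat) : Prop :=
  let k := length P in
  (forall j, (j <= k)%nat -> exists u, inLang theta m u /\ heightProfile P u = h j) /\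
  (forall u, inLang theta m u -> exists j, (j <= k)%nat /\ heightProfile P u = h j) /\
  (forall j j' u v, (j < j')%nat -> (j' <= k)%nat ->
     inLang theta m u -> inLang theta m v ->
     heightProfile P u = h j -> heightProfile P v = h j' -> lexlt u v).

Definition occCount (theta : R) (m : nat) (P : list nat) (hj : list nat)
    (N : nat) : nat :=
  length (filter (fun n => if list_eq_dec Nat.eq_dec
                               (heightProfile P (factorAt theta m n)) hj
                           then true else false)
                 (seq 0 (N + 1 - m))).

Definition hasFrequency (theta : R) (m : nat) (P : list nat) (hj : list nat)
    (f : R) : Prop :=
  Un_cv (fun N => INR (occCount theta m P hj N) / INR N) f.

From Stdlib Require Import Reals List Arith ZArith Lia Lra.
From Stdlib Require Import IndefiniteDescription.
Open Scope R_scope.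

(* The factor of length m at position n is the coding of the rotation orbit of
   x = {nθ}, and among its first s letters there are ⌊x + sθ⌋ = ⌊sθ⌋ + [0 < {-sθ} <= x]
   letters b.  Hence the height profile with respect to P records exactly which of
   the points {-s_l θ} lie in (0, x], that is, the cell [q'_j, q'_{j+1}) containing x:
   points of the same cell have the same profile, points of different cells different
   ones.  Codings are lexicographically nondecreasing in x, so listing the varieties in
   lexicographic order lists the cells from left to right.

   For the frequencies, the number of n < M with {nθ} >= {-sθ} > 0 is
   Σ_{n<M} (⌊(n+s)θ⌋ - ⌊nθ⌋ - ⌊sθ⌋), which telescopes to s differences of fractional
   parts and so stays within s of M (1 - {-sθ}).  Every cell thus has bounded
   discrepancy, which gives its frequency q'_{j+1} - q'_j and shows that it is visited. *)

Lemma frac_part_bounds x : 0 <= frac_part x < 1.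
Proof. destruct (base_fp x); lra. Qed.

Lemma Int_part_eq x z : IZR z <= x < IZR z + 1 -> Int_part x = z.
Proof. intros Hx; symmetry; apply Int_part_spec; lra. Qed.

Lemma Int_part_add_IZR x z : Int_part (x + IZR z) = (Int_part x + z)%Z.
Proof. apply Int_part_eq; rewrite plus_IZR; destruct (base_Int_part x); lra. Qed.

Lemma frac_part_add_IZR x z : frac_part (x + IZR z) = frac_part x.
Proof. unfold frac_part; rewrite Int_part_add_IZR, plus_IZR; ring. Qed.

Lemma frac_part_id x : 0 <= x < 1 -> frac_part x = x.
Proof. intros Hx; unfold frac_part; rewrite (Int_part_eq x 0) by (simpl; lra); simpl; ring. Qed.

Lemma frac_part_opp_0 x : frac_part x = 0 -> frac_part (- x) = 0.
Proof.
  intros Hx; rewrite (Rplus_Int_part_frac_part x), Hx, Ropp_plus_distr, Ropp_0, Rplus_0_r.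
  rewrite <- opp_IZR, <- (Rplus_0_l (IZR _)), frac_part_add_IZR; apply frac_part_id; lra.
Qed.

Lemma frac_part_opp x : frac_part x <> 0 -> frac_part (- x) = 1 - frac_part x.
Proof.
  intros Hx; pose proof (frac_part_bounds x).
  replace (- x) with ((1 - frac_part x) + IZR (- Int_part x - 1)).
  - rewrite frac_part_add_IZR; apply frac_part_id; lra.
  - rewrite (Rplus_Int_part_frac_part x) at 3; rewrite minus_IZR, opp_IZR; simpl; ring.
Qed.

(* [{-y}] is the distance from [y] up to the next integer, or [0] if [y] is an integer. *)
Lemma Int_part_add_cross x y : 0 <= x < 1 -> 0 < frac_part (- y) <= x ->
  Int_part (x + y) = (Int_part y + 1)%Z.
Proof.
  intros Hx Hc; pose proof (frac_part_bounds y).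
  destruct (Req_dec (frac_part y) 0) as [E|E].
  - rewrite frac_part_opp_0 in Hc by exact E; lra.
  - rewrite frac_part_opp in Hc by exact E.
    apply Int_part_eq; rewrite plus_IZR; destruct (base_Int_part y).
    unfold frac_part in *; simpl; lra.
Qed.

Lemma Int_part_add_no_cross x y : 0 <= x < 1 -> ~ (0 < frac_part (- y) <= x) ->
  Int_part (x + y) = Int_part y.
Proof.
  intros Hx Hc; pose proof (frac_part_bounds y).
  apply Int_part_eq; destruct (base_Int_part y).
  destruct (Req_dec (frac_part y) 0) as [E|E].
  - unfold frac_part in E; lra.
  - rewrite frac_part_opp in Hc by exact E.
    assert (x < 1 - frac_part y) by lra. unfold frac_part in *; lra.
Qed.

Lemma Int_part_add_eq_iff x x' y : 0 <= x < 1 -> 0 <= x' < 1 ->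
  Int_part (x + y) = Int_part (x' + y) <->
  (0 < frac_part (- y) <= x <-> 0 < frac_part (- y) <= x').
Proof.
  intros Hx Hx'.
  assert (Hdec : forall z, {0 < frac_part (- y) <= z} + {~ (0 < frac_part (- y) <= z)})
    by (intros z; destruct (Rlt_dec 0 (frac_part (- y))), (Rle_dec (frac_part (- y)) z);
        [left|right..]; lra).
  destruct (Hdec x), (Hdec x');
    rewrite ?(Int_part_add_cross x), ?(Int_part_add_no_cross x),
      ?(Int_part_add_cross x'), ?(Int_part_add_no_cross x') by assumption;
    split; intros; (tauto || lia).
Qed.

Lemma lexlt_irrefl u : ~ lexlt u u.
Proof. induction u as [|a u IH]; simpl; [tauto|]. intros [[-> E]|[_ H]]; [discriminate|auto]. Qed.

Lemma lexlt_asym u v : lexlt u v -> ~ lexlt v u.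
Proof.
  revert v; induction u as [|a u IH]; intros [|b v]; simpl; try tauto.
  intros [[-> ->]|[-> H]] [[E1 E2]|[E H']]; subst; try discriminate.
  exact (IH _ H H').
Qed.

Lemma countB_app u v : countB (u ++ v) = (countB u + countB v)%nat.
Proof. unfold countB; rewrite filter_app, length_app; reflexivity. Qed.

Lemma firstn_add {A : Type} a b (l : list A) :
  firstn (a + b) l = firstn a l ++ firstn b (skipn a l).
Proof. revert l; induction a as [|a IH]; intros [|x l]; simpl; rewrite ?firstn_nil; f_equal; auto. Qed.

Lemma heightProfile_eq_iff P u v :
  heightProfile P u = heightProfile P v <->
  forall l, countB (firstn (partialSum P l) u) = countB (firstn (partialSum P l) v).
Proof.
  unfold partialSum; revert u v; induction P as [|p P IH]; intros u v; simpl.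
  - split; [intros _ l; rewrite firstn_nil; reflexivity|reflexivity].
  - split.
    + intros E [|l]; [reflexivity|]; injection E as E1 E2; simpl.
      rewrite !firstn_add, !countB_app, E1, (proj1 (IH _ _) E2 l); reflexivity.
    + intros H; pose proof (H 1%nat) as H1; simpl in H1; rewrite !Nat.add_0_r in H1.
      f_equal; [exact H1|]; apply IH; intros l.
      specialize (H (S l)); simpl in H; rewrite !firstn_add, !countB_app in H; lia.
Qed.

Lemma partialSum_le P l : (partialSum P l <= fold_right Nat.add 0%nat P)%nat.
Proof.
  unfold partialSum; revert l; induction P as [|p P IH]; intros [|l]; simpl; try lia.
  specialize (IH l); lia.
Qed.

Lemma strictly_increasing_bounded_id (r : nat -> nat) k :
  (forall j, (j <= k)%nat -> (r j <= k)%nat) ->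
  (forall i j, (i < j)%nat -> (j <= k)%nat -> (r i < r j)%nat) ->
  forall j, (j <= k)%nat -> r j = j.
Proof.
  intros Hb Hm.
  assert (Hge : forall j, (j <= k)%nat -> (j <= r j)%nat).
  { induction j as [|j IH]; intros Hj; [lia|].
    pose proof (Hm j (S j) ltac:(lia) Hj); specialize (IH ltac:(lia)); lia. }
  assert (Hle : forall d, (d <= k)%nat -> (r (k - d) <= k - d)%nat).
  { induction d as [|d IH]; intros Hd; [rewrite Nat.sub_0_r; apply Hb; lia|].
    pose proof (Hm (k - S d)%nat (k - d)%nat ltac:(lia) ltac:(lia)); specialize (IH ltac:(lia)); lia. }
  intros j Hj; pose proof (Hge j Hj); pose proof (Hle (k - j)%nat ltac:(lia)).
  replace (k - (k - j))%nat with j in * by lia; lia.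
Qed.

(** * Coding of the rotation *)

Section Coding.

Variable theta : R.
Hypothesis Htheta : 0 < theta < 1.

Definition letter (x : R) : bool := if Rlt_dec x (1 - theta) then false else true.

Fixpoint code (x : R) (m : nat) : list bool :=
  match m with
  | O => nil
  | S m' => letter x :: code (rot theta x) m'
  end.

Lemma code_length x m : length (code x m) = m.
Proof. revert x; induction m; simpl; auto. Qed.

Lemma code_add x a b : code x (a + b) = code x a ++ code (Nat.iter a (rot theta) x) b.
Proof. revert x; induction a as [|a IH]; intros x; simpl; auto. rewrite IH, <- Nat.iter_succ_r; reflexivity. Qed.

Lemma firstn_code x s m : (s <= m)%nat -> firstn s (code x m) = code x s.
Proof.
  intros Hs; replace m with (s + (m - s))%nat by lia.
  rewrite code_add, firstn_app, code_length, Nat.sub_diag, firstn_all2 by (rewrite code_length; lia).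
  apply app_nil_r.
Qed.

Lemma rot_bounds x : 0 <= rot theta x < 1.
Proof. apply frac_part_bounds. Qed.

Lemma rot_frac_mult n : rot theta (frac_part (INR n * theta)) = frac_part (INR (S n) * theta).
Proof.
  unfold rot, fracR.
  replace (INR (S n) * theta) with (frac_part (INR n * theta) + theta + IZR (Int_part (INR n * theta)))
    by (rewrite S_INR; unfold frac_part; ring).
  symmetry; apply frac_part_add_IZR.
Qed.

Lemma factorAt_code m n : factorAt theta m n = code (frac_part (INR n * theta)) m.
Proof.
  unfold factorAt; revert n; induction m as [|m IH]; intros n; simpl; auto.
  rewrite rot_frac_mult, <- IH; reflexivity.
Qed.

Lemma rot_letter x : 0 <= x < 1 -> x + theta = rot theta x + (if letter x then 1 else 0).
Proof.
  intros Hx; unfold rot, fracR, letter; destruct (Rlt_dec x (1 - theta)).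
  - rewrite frac_part_id by lra; ring.
  - replace (x + theta) with ((x + theta - 1) + IZR 1) at 2 by (simpl; ring).
    rewrite frac_part_add_IZR, frac_part_id by lra; ring.
Qed.

Lemma countB_code x s : 0 <= x < 1 -> Z.of_nat (countB (code x s)) = Int_part (x + INR s * theta).
Proof.
  revert x; induction s as [|s IH]; intros x Hx; simpl code.
  - rewrite Rmult_0_l, Rplus_0_r, (Int_part_eq x 0) by (simpl; lra); reflexivity.
  - replace (x + INR (S s) * theta) with
      (rot theta x + INR s * theta + IZR (if letter x then 1 else 0)%Z)
      by (pose proof (rot_letter x Hx); rewrite S_INR; destruct (letter x); simpl in *; lra).
    rewrite Int_part_add_IZR, <- IH by apply rot_bounds.
    unfold countB; destruct (letter x); simpl; lia.
Qed.

Lemma inI_letter r x : 0 <= x < 1 -> inI theta r x <-> r = letter x.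
Proof.
  intros Hx; unfold inI, letter; destruct (Rlt_dec x (1 - theta)), r;
    split; intros; (discriminate || lra || reflexivity).
Qed.

Lemma inJ_iff u x : inJ theta u x <-> 0 <= x < 1 /\ code x (length u) = u.
Proof.
  unfold inJ; split; intros [Hx H]; split; auto; revert x Hx H.
  - induction u as [|c u IH]; intros x Hx H; simpl; auto.
    f_equal.
    + symmetry; apply inI_letter, (H 0%nat); simpl; auto; lia.
    + apply IH; [apply rot_bounds|]; intros i Hi.
      rewrite <- Nat.iter_succ_r; apply (H (S i)); simpl; lia.
  - induction u as [|c u IH]; intros x Hx H i Hi; simpl in *; [lia|].
    injection H as Hc Hu; destruct i as [|i]; simpl.
    + apply inI_letter; auto.
    + change (inI theta (nth i u false) (Nat.iter (S i) (rot theta) x)).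
      rewrite Nat.iter_succ_r; apply IH; auto using rot_bounds; lia.
Qed.

(* The coding is lexicographically nondecreasing: [letter] is, and [rot]
   preserves the order of two points coded by the same letter. *)
Lemma code_lexlt x y m : 0 <= x -> x < y -> y < 1 ->
  code x m <> code y m -> lexlt (code x m) (code y m).
Proof.
  revert x y; induction m as [|m IH]; intros x y Hx Hxy Hy Hne; simpl in *; [congruence|].
  assert (Hrot : letter x = letter y -> rot theta x < rot theta y).
  { pose proof (rot_letter x ltac:(lra)); pose proof (rot_letter y ltac:(lra)).
    intros E; rewrite E in *; lra. }
  unfold letter in *; destruct (Rlt_dec x (1 - theta)), (Rlt_dec y (1 - theta)).
  - right; split; auto; apply IH; [apply rot_bounds|apply Hrot; reflexivity|apply rot_bounds|congruence].
  - left; auto.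
  - lra.
  - right; split; auto; apply IH; [apply rot_bounds|apply Hrot; reflexivity|apply rot_bounds|congruence].
Qed.

End Coding.

Section Profiles.

Variable theta : R.
Hypothesis Htheta : 0 < theta < 1.
Variable P : list nat.

Definition profile (x : R) : list nat :=
  heightProfile P (code theta x (fold_right Nat.add 0%nat P)).

Definition cutPoint (l : nat) : R := frac_part (- (INR (partialSum P l) * theta)).

Lemma countB_code_eq_iff x y s : 0 <= x < 1 -> 0 <= y < 1 ->
  countB (code theta x s) = countB (code theta y s) <->
  (0 < frac_part (- (INR s * theta)) <= x <-> 0 < frac_part (- (INR s * theta)) <= y).
Proof.
  intros Hx Hy; rewrite <- Int_part_add_eq_iff by assumption.
  rewrite <- !countB_code by assumption; split; [intros ->; reflexivity|apply Nat2Z.inj].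
Qed.

Lemma profile_eq_iff x y : 0 <= x < 1 -> 0 <= y < 1 ->
  profile x = profile y <->
  forall l, (0 < cutPoint l <= x <-> 0 < cutPoint l <= y).
Proof.
  intros Hx Hy; unfold profile, cutPoint; rewrite heightProfile_eq_iff.
  split; intros H l; specialize (H l);
    rewrite !firstn_code in * by apply partialSum_le; apply countB_code_eq_iff; auto.
Qed.

Lemma profile_factorAt n :
  heightProfile P (factorAt theta (fold_right Nat.add 0%nat P) n) =
  profile (frac_part (INR n * theta)).
Proof. unfold profile; rewrite factorAt_code; reflexivity. Qed.

End Profiles.

(** * Sums with bounded discrepancy *)

Fixpoint rsum (f : nat -> R) (M : nat) : R :=
  match M with
  | O => 0
  | S M' => rsum f M' + f M'
  end.

Lemma rsum_ext f g M : (forall n, (n < M)%nat -> f n = g n) -> rsum f M = rsum g M.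
Proof. induction M as [|M IH]; intros H; simpl; auto. rewrite IH, H; auto. Qed.

Lemma rsum_minus f g M : rsum (fun n => f n - g n) M = rsum f M - rsum g M.
Proof. induction M as [|M IH]; simpl; [|rewrite IH]; ring. Qed.

Lemma rsum_const c M : rsum (fun _ => c) M = INR M * c.
Proof. induction M as [|M IH]; simpl rsum; [|rewrite IH, S_INR]; simpl; ring. Qed.

Lemma rsum_telescope g M : rsum (fun n => g (S n) - g n) M = g M - g O.
Proof. induction M as [|M IH]; simpl; [|rewrite IH]; ring. Qed.

Lemma rsum_shift_telescope e s M :
  rsum (fun n => e (n + s)%nat - e n) M = rsum (fun i => e (M + i)%nat - e i) s.
Proof.
  induction M as [|M IH]; simpl rsum.
  - rewrite (rsum_ext _ (fun _ => 0)), rsum_const by (intros; simpl; ring); ring.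
  - rewrite IH, !rsum_minus.
    rewrite (rsum_ext (fun i => e (S M + i)%nat) (fun i => e (M + S i)%nat)) by (intros; f_equal; lia).
    pose proof (rsum_telescope (fun i => e (M + i)%nat) s) as T; rewrite rsum_minus in T.
    rewrite Nat.add_0_r in T; simpl in T. lra.
Qed.

Lemma rsum_abs_le f c M : (forall n, (n < M)%nat -> Rabs (f n) <= c) -> Rabs (rsum f M) <= INR M * c.
Proof.
  induction M as [|M IH]; intros H; simpl rsum.
  - rewrite Rabs_R0; simpl; lra.
  - rewrite S_INR; eapply Rle_trans; [apply Rabs_triang|].
    pose proof (IH (fun n Hn => H n ltac:(lia))); pose proof (H M ltac:(lia)); lra.
Qed.

Lemma INR_length_filter f M :
  INR (length (filter f (seq 0 M))) = rsum (fun n => if f n then 1 else 0) M.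
Proof.
  induction M as [|M IH]; simpl rsum; [reflexivity|].
  rewrite seq_S, filter_app, length_app, plus_INR, IH; simpl.
  destruct (f M); simpl; ring.
Qed.

Definition bounded_discrepancy (f : nat -> R) (d : R) : Prop :=
  exists K, forall M, Rabs (rsum f M - INR M * d) <= K.

Lemma bounded_discrepancy_minus f g d e :
  bounded_discrepancy f d -> bounded_discrepancy g e ->
  bounded_discrepancy (fun n => f n - g n) (d - e).
Proof.
  intros [K Hf] [L Hg]; exists (K + L); intros M; rewrite rsum_minus.
  specialize (Hf M); specialize (Hg M).
  pose proof (Rabs_triang (rsum f M - INR M * d) (- (rsum g M - INR M * e))) as T.
  rewrite Rabs_Ropp in T.
  replace (rsum f M - rsum g M - INR M * (d - e))
    with (rsum f M - INR M * d + - (rsum g M - INR M * e)) by ring; lra.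
Qed.

Lemma bounded_discrepancy_nonzero f d : bounded_discrepancy f d -> 0 < d -> exists n, f n <> 0.
Proof.
  intros [K HK] Hd; destruct (INR_archimed d K Hd) as [M HM].
  assert (Hsum : rsum f M <> 0).
  { intros E; specialize (HK M); pose proof (pos_INR M); rewrite E, Rminus_0_l, Rabs_Ropp, Rabs_right in HK by nra; lra. }
  clear HK HM; induction M as [|M IH]; simpl in Hsum; [lra|].
  destruct (Req_dec (f M) 0) as [E|E]; [apply IH; lra|eauto].
Qed.

Lemma bounded_discrepancy_cv f d m :
  bounded_discrepancy f d -> Un_cv (fun N => rsum f (N + 1 - m) / INR N) d.
Proof.
  intros [K HK] eps Heps.
  set (C := K + (INR m + 1) * Rabs d).
  destruct (INR_archimed eps C Heps) as [N0 HN0].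
  exists (Nat.max N0 (S m)); intros N HN; unfold R_dist.
  assert (HN0' : INR N0 <= INR N) by (apply le_INR; lia).
  assert (Hm : INR m + 1 <= INR N) by (rewrite <- S_INR; apply le_INR; lia).
  pose proof (pos_INR m).
  specialize (HK (N + 1 - m)%nat); rewrite minus_INR, plus_INR in HK by lia; simpl in HK.
  assert (Hd : Rabs ((1 - INR m) * d) <= (INR m + 1) * Rabs d).
  { rewrite Rabs_mult; apply Rmult_le_compat_r; [apply Rabs_pos|].
    apply Rabs_le; lra. }
  replace (rsum f (N + 1 - m) / INR N - d)
    with ((rsum f (N + 1 - m) - (INR N + 1 - INR m) * d + (1 - INR m) * d) / INR N)
    by (field; lra).
  unfold Rdiv; rewrite Rabs_mult, Rabs_inv, (Rabs_right (INR N)) by lra.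
  apply (Rmult_lt_reg_r (INR N)); [lra|].
  rewrite Rmult_assoc, Rinv_l, Rmult_1_r by lra.
  pose proof (Rabs_triang (rsum f (N + 1 - m) - (INR N + 1 - INR m) * d) ((1 - INR m) * d)).
  assert (INR N0 * eps <= INR N * eps) by (apply Rmult_le_compat_r; lra).
  unfold C in HN0; lra.
Qed.

Definition step (c x : R) : R := if Rle_dec c x then 1 else 0.

Lemma frac_part_mult_add theta n s :
  frac_part (INR (n + s) * theta) = frac_part (frac_part (INR n * theta) + INR s * theta).
Proof.
  replace (INR (n + s) * theta)
    with (frac_part (INR n * theta) + INR s * theta + IZR (Int_part (INR n * theta)))
    by (rewrite plus_INR; unfold frac_part; ring).
  apply frac_part_add_IZR.
Qed.

Lemma step_discrepancy theta s :
  bounded_discrepancy (fun n => step (frac_part (- (INR s * theta))) (frac_part (INR n * theta)))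
    (1 - frac_part (- (INR s * theta))).
Proof.
  set (e := fun n => frac_part (INR n * theta)).
  set (f := frac_part (INR s * theta)).
  exists (INR s); intros M; pose proof (pos_INR s).
  destruct (Req_dec f 0) as [Hf|Hf].
  - rewrite frac_part_opp_0 by exact Hf.
    rewrite (rsum_ext _ (fun _ => 1)), rsum_const.
    + rewrite Rminus_0_r, Rminus_diag, Rabs_R0; exact H.
    + intros n _; unfold step; destruct Rle_dec as [|Hn]; [reflexivity|].
      destruct (frac_part_bounds (INR n * theta)); lra.
  - rewrite frac_part_opp by exact Hf; fold f.
    rewrite (rsum_ext _ (fun n => f - (e (n + s)%nat - e n))).
    + rewrite rsum_minus, rsum_const, rsum_shift_telescope.
      replace (INR M * f - rsum (fun i => e (M + i)%nat - e i) s - INR M * (1 - (1 - f)))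
        with (- rsum (fun i => e (M + i)%nat - e i) s) by ring.
      rewrite Rabs_Ropp, <- (Rmult_1_r (INR s)); apply rsum_abs_le; intros i _.
      pose proof (frac_part_bounds (INR (M + i) * theta));
        pose proof (frac_part_bounds (INR i * theta)); apply Rabs_le; unfold e; lra.
    + intros n _; unfold e; rewrite frac_part_mult_add.
      set (x := frac_part (INR n * theta)).
      assert (0 <= x < 1) by apply frac_part_bounds.
      assert (0 <= f < 1) by apply frac_part_bounds.
      assert (Hopp : frac_part (- (INR s * theta)) = 1 - f) by (apply frac_part_opp; exact Hf).
      unfold step; destruct Rle_dec; unfold frac_part at 1.
      * rewrite Int_part_add_cross by (auto; lra).
        rewrite plus_IZR; unfold f, frac_part; simpl; ring.
      * rewrite Int_part_add_no_cross by (auto; lra).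
        unfold f, frac_part; ring.
Qed.

(** * Cells and varieties *)

Definition in_cell (q : nat -> R) (j : nat) (x : R) : Prop := q j <= x < q (S j).

Section Cells.

Variable theta : R.
Hypothesis Htheta : 0 < theta < 1.
Variables (P : list nat) (q : nat -> R).
Hypothesis Hq : sortedPoints theta P q.

Lemma q_last : q (S (length P)) = 1.
Proof. apply Hq. Qed.

Lemma q_is_cutPoint j : (j <= length P)%nat -> exists l, q j = cutPoint theta P l.
Proof. intros Hj; destruct (proj1 (proj2 Hq) j Hj) as [l [_ El]]; exists l; exact El. Qed.

Lemma cutPoint_is_q l : exists i, (i <= length P)%nat /\ cutPoint theta P l = q i.
Proof.
  destruct (le_lt_dec l (length P)) as [Hl|Hl].
  - destruct (proj1 (proj2 (proj2 Hq)) l Hl) as [i [Hi Ei]]; exists i; auto.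
  - destruct (proj1 (proj2 (proj2 Hq)) (length P) (le_n _)) as [i [Hi Ei]]; exists i; split; auto.
    unfold cutPoint, partialSum in *; rewrite firstn_all2 by lia; rewrite firstn_all in Ei; auto.
Qed.

Lemma q_bounds j : (j <= length P)%nat -> 0 <= q j < 1.
Proof. intros Hj; destruct (q_is_cutPoint j Hj) as [l ->]; apply frac_part_bounds. Qed.

Lemma q_lt_succ j : (j <= length P)%nat -> q j < q (S j).
Proof.
  intros Hj; destruct (Nat.eq_dec j (length P)) as [->|Hne].
  - rewrite q_last; apply q_bounds; lia.
  - apply (proj1 Hq); lia.
Qed.

Lemma q_le i j : (i <= j <= S (length P))%nat -> q i <= q j.
Proof.
  intros [Hij Hj]; induction Hij as [|j Hij IH]; [lra|].
  pose proof (q_lt_succ j ltac:(lia)); specialize (IH ltac:(lia)); lra.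
Qed.

Lemma q_0 : q 0%nat = 0.
Proof.
  destruct (cutPoint_is_q 0) as [j [Hj Ej]].
  unfold cutPoint, partialSum in Ej; simpl in Ej.
  rewrite Rmult_0_l, Ropp_0, frac_part_id in Ej by lra.
  pose proof (q_le 0 j ltac:(lia)); pose proof (q_bounds 0 ltac:(lia)); lra.
Qed.

Lemma in_cell_bounds j x : (j <= length P)%nat -> in_cell q j x -> 0 <= x < 1.
Proof.
  intros Hj [Hlo Hhi]; pose proof (q_bounds j Hj); pose proof (q_le (S j) (S (length P)) ltac:(lia)).
  rewrite q_last in *; lra.
Qed.

Lemma in_cell_exists x : 0 <= x < 1 -> exists j, (j <= length P)%nat /\ in_cell q j x.
Proof.
  intros Hx.
  assert (Hbelow : forall t, (t <= length P)%nat -> x < q (S t) ->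
                   exists j, (j <= t)%nat /\ in_cell q j x).
  { induction t as [|t IH]; intros Ht Hlt.
    - exists 0%nat; split; [lia|]; unfold in_cell; rewrite q_0; lra.
    - destruct (Rlt_dec x (q (S t))) as [Hlt'|Hge].
      + destruct (IH ltac:(lia) Hlt') as [j [Hj Hin]]; exists j; split; [lia|exact Hin].
      + exists (S t); split; [lia|]; unfold in_cell; lra. }
  destruct (Hbelow (length P) (le_n _)) as [j [Hj Hin]].
  - rewrite q_last; lra.
  - exists j; auto.
Qed.

Lemma in_cell_unique i j x : (i <= length P)%nat -> (j <= length P)%nat ->
  in_cell q i x -> in_cell q j x -> i = j.
Proof.
  intros Hi Hj [Hi1 Hi2] [Hj1 Hj2].
  destruct (lt_eq_lt_dec i j) as [[Hlt|Heq]|Hlt]; auto.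
  - pose proof (q_le (S i) j ltac:(lia)); lra.
  - pose proof (q_le (S j) i ltac:(lia)); lra.
Qed.

Lemma pos_q_le_iff i j x : (i <= length P)%nat -> (j <= length P)%nat -> in_cell q j x ->
  0 < q i <= x <-> (0 < i <= j)%nat.
Proof.
  intros Hi Hj [Hlo Hhi]; split.
  - intros [Hpos Hle]; split.
    + destruct i; [rewrite q_0 in Hpos; lra|lia].
    + destruct (le_lt_dec i j) as [|Hlt]; [assumption|].
      pose proof (q_le (S j) i ltac:(lia)); lra.
  - intros [Hpos Hle]; split.
    + pose proof (q_lt_succ 0 ltac:(lia)); pose proof (q_le 1 i ltac:(lia)); rewrite q_0 in *; lra.
    + pose proof (q_le i j ltac:(lia)); lra.
Qed.

(* If [i <> j], the cut point [q (max i j)] lies in exactly one of [(0, x]] and [(0, y]]. *)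
Lemma profile_eq_iff_same_cell i j x y : (i <= length P)%nat -> (j <= length P)%nat ->
  in_cell q i x -> in_cell q j y -> profile theta P x = profile theta P y <-> i = j.
Proof.
  intros Hi Hj Hx Hy.
  rewrite profile_eq_iff by (eauto using in_cell_bounds).
  split.
  - intros H.
    destruct (q_is_cutPoint (Nat.max i j) ltac:(lia)) as [l El].
    specialize (H l); rewrite <- El in H.
    rewrite (pos_q_le_iff _ i), (pos_q_le_iff _ j) in H by (auto; lia); lia.
  - intros <- l; destruct (cutPoint_is_q l) as [i' [Hi' ->]].
    rewrite (pos_q_le_iff _ i x), (pos_q_le_iff _ i y) by auto; tauto.
Qed.

Lemma in_cell_lexlt i j x y : (i < j)%nat -> (j <= length P)%nat ->
  in_cell q i x -> in_cell q j y ->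
  lexlt (code theta x (fold_right Nat.add 0%nat P)) (code theta y (fold_right Nat.add 0%nat P)).
Proof.
  intros Hij Hj Hx Hy.
  pose proof (in_cell_bounds i x ltac:(lia) Hx); pose proof (in_cell_bounds j y Hj Hy).
  assert (x < y) by (pose proof (q_le (S i) j ltac:(lia)); destruct Hx, Hy; lra).
  apply code_lexlt; auto; try lra.
  intros E; assert (Hprof : profile theta P x = profile theta P y) by (unfold profile; rewrite E; auto).
  rewrite (profile_eq_iff_same_cell i j) in Hprof by (auto; lia); lia.
Qed.

Lemma cell_discrepancy j : (j <= length P)%nat ->
  bounded_discrepancy (fun n => step (q j) (frac_part (INR n * theta)) -
                                step (q (S j)) (frac_part (INR n * theta)))
    (q (S j) - q j).
Proof.
  assert (Hpoint : forall i, (i <= S (length P))%nat ->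
            bounded_discrepancy (fun n => step (q i) (frac_part (INR n * theta))) (1 - q i)).
  { intros i Hi; destruct (Nat.eq_dec i (S (length P))) as [->|Hne].
    - rewrite q_last; exists 0; intros M.
      rewrite (rsum_ext _ (fun _ => 0)), rsum_const.
      + rewrite Rminus_diag, !Rmult_0_r, Rminus_0_r, Rabs_R0; lra.
      + intros n _; unfold step; destruct Rle_dec; [|reflexivity].
        destruct (frac_part_bounds (INR n * theta)); lra.
    - destruct (q_is_cutPoint i ltac:(lia)) as [l ->]; apply step_discrepancy. }
  intros Hj; replace (q (S j) - q j) with ((1 - q j) - (1 - q (S j))) by ring.
  apply bounded_discrepancy_minus; apply Hpoint; lia.
Qed.

Lemma in_cell_indicator j x (b : bool) : (j <= length P)%nat -> (b = true <-> in_cell q j x) ->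
  (if b then 1 else 0) = step (q j) x - step (q (S j)) x.
Proof.
  intros Hj Hb; pose proof (q_lt_succ j Hj); unfold step.
  destruct b.
  - destruct (proj1 Hb eq_refl); destruct (Rle_dec (q j) x), (Rle_dec (q (S j)) x); lra.
  - assert (Hout : ~ in_cell q j x) by (rewrite <- Hb; discriminate).
    unfold in_cell in Hout; destruct (Rle_dec (q j) x), (Rle_dec (q (S j)) x); lra.
Qed.

Lemma cell_visited j : (j <= length P)%nat -> exists n, in_cell q j (frac_part (INR n * theta)).
Proof.
  intros Hj; pose proof (q_lt_succ j Hj).
  destruct (bounded_discrepancy_nonzero _ _ (cell_discrepancy j Hj)) as [n Hn]; [lra|].
  exists n; unfold step, in_cell in *.
  destruct (Rle_dec (q j) _), (Rle_dec (q (S j)) _); lra.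
Qed.

Lemma varietyListing_exists : exists h, varietyListing theta (fold_right Nat.add 0%nat P) P h.
Proof.
  destruct (functional_choice
              (fun j n => (j <= length P)%nat -> in_cell q j (frac_part (INR n * theta))))
    as [pos Hpos].
  { intros j; destruct (le_lt_dec j (length P)) as [Hj|Hj].
    - destruct (cell_visited j Hj) as [n Hn]; eauto.
    - exists 0%nat; lia. }
  assert (Hcell : forall i j n, (i <= length P)%nat -> (j <= length P)%nat ->
            in_cell q i (frac_part (INR n * theta)) ->
            profile theta P (frac_part (INR n * theta)) =
            profile theta P (frac_part (INR (pos j) * theta)) <-> i = j)
    by (intros; apply (profile_eq_iff_same_cell); auto).
  exists (fun j => profile theta P (frac_part (INR (pos j) * theta))); split; [|split].
  - intros j Hj; exists (factorAt theta (fold_right Nat.add 0%nat P) (pos j)).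
    split; [exists (pos j); reflexivity|apply profile_factorAt].
  - intros u [n ->].
    destruct (in_cell_exists _ (frac_part_bounds (INR n * theta))) as [j [Hj Hn]].
    exists j; split; [exact Hj|]; rewrite profile_factorAt; apply (Hcell j); auto.
  - intros j j' u v Hjj' Hj' [n ->] [n' ->] Hu Hv; rewrite profile_factorAt in Hu, Hv.
    destruct (in_cell_exists _ (frac_part_bounds (INR n * theta))) as [i [Hi Hn]].
    destruct (in_cell_exists _ (frac_part_bounds (INR n' * theta))) as [i' [Hi' Hn']].
    apply (Hcell i j) in Hu; auto; [|lia]. apply (Hcell i' j') in Hv; auto. subst i i'.
    rewrite !factorAt_code; apply (in_cell_lexlt j j'); auto.
Qed.

(* The map sending [j] to the cell of a factor of profile [h j] is strictly
   increasing on [0..k], hence the identity. *)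
Lemma varietyListing_profile_of_cell h : varietyListing theta (fold_right Nat.add 0%nat P) P h ->
  forall j, (j <= length P)%nat ->
  exists n, in_cell q j (frac_part (INR n * theta)) /\ profile theta P (frac_part (INR n * theta)) = h j.
Proof.
  intros [Hrep [_ Horder]].
  destruct (functional_choice
              (fun j n => (j <= length P)%nat ->
                 profile theta P (frac_part (INR n * theta)) = h j)) as [pos Hpos].
  { intros j; destruct (le_lt_dec j (length P)) as [Hj|Hj].
    - destruct (Hrep j Hj) as [u [[n ->] Hu]]; rewrite profile_factorAt in Hu; eauto.
    - exists 0%nat; lia. }
  destruct (functional_choice
              (fun j i => (j <= length P)%nat ->
                 (i <= length P)%nat /\ in_cell q i (frac_part (INR (pos j) * theta))))
    as [r Hr].
  { intros j; destruct (in_cell_exists _ (frac_part_bounds (INR (pos j) * theta)))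
      as [i [Hi Hin]]; eauto. }
  assert (Hordered : forall j j', (j < j')%nat -> (j' <= length P)%nat ->
      lexlt (factorAt theta (fold_right Nat.add 0%nat P) (pos j))
            (factorAt theta (fold_right Nat.add 0%nat P) (pos j'))).
  { intros j j' Hjj' Hj'; apply (Horder j j'); auto; try (eexists; reflexivity);
      rewrite profile_factorAt; apply Hpos; lia. }
  assert (Hmono : forall j j', (j < j')%nat -> (j' <= length P)%nat -> (r j < r j')%nat).
  { intros j j' Hjj' Hj'.
    destruct (Hr j ltac:(lia)) as [Hrj Hinj], (Hr j' Hj') as [Hrj' Hinj'].
    destruct (lt_eq_lt_dec (r j) (r j')) as [[Hlt|Heq]|Hgt]; [exact Hlt| |]; exfalso.
    - assert (Hsame : h j = h j').
      { rewrite <- Hpos, <- Hpos by lia.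
        apply (profile_eq_iff_same_cell (r j) (r j')); auto. }
      apply (lexlt_irrefl (factorAt theta (fold_right Nat.add 0%nat P) (pos j'))).
      apply (Horder j j'); auto; try (eexists; reflexivity);
        rewrite profile_factorAt, ?Hsame; apply Hpos; lia.
    - apply (lexlt_asym _ _ (Hordered j j' Hjj' Hj')); rewrite !factorAt_code.
      apply (in_cell_lexlt (r j') (r j)); auto. }
  intros j Hj; exists (pos j); split; [|exact (Hpos j Hj)].
  destruct (Hr j Hj) as [_ Hin].
  rewrite (strictly_increasing_bounded_id r (length P) (fun j Hj => proj1 (Hr j Hj)) Hmono j Hj) in Hin.
  exact Hin.
Qed.

Lemma varietyListing_cells h : varietyListing theta (fold_right Nat.add 0%nat P) P h ->
  forall j x, (j <= length P)%nat -> 0 <= x < 1 ->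
  profile theta P x = h j <-> in_cell q j x.
Proof.
  intros Hh j x Hj Hx.
  destruct (varietyListing_profile_of_cell h Hh j Hj) as [n [Hn <-]].
  destruct (in_cell_exists x Hx) as [i [Hi Hin]].
  rewrite (profile_eq_iff_same_cell i j) by auto.
  split; [intros <-; exact Hin|apply in_cell_unique; auto].
Qed.

Lemma varietyListing_J_sub h j u : varietyListing theta (fold_right Nat.add 0%nat P) P h ->
  (j <= length P)%nat -> inLang theta (fold_right Nat.add 0%nat P) u ->
  heightProfile P u = h j <-> J_sub theta u (q j) (q (S j)).
Proof.
  intros Hh Hj [n ->]; rewrite profile_factorAt.
  rewrite (varietyListing_cells h Hh j) by (auto using frac_part_bounds).
  split.
  - intros Hn x Hx; apply inJ_iff in Hx as [Hx E].
    rewrite factorAt_code, code_length in E.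
    apply (varietyListing_cells h Hh j x Hj Hx).
    replace (profile theta P x) with (profile theta P (frac_part (INR n * theta)))
      by (unfold profile; rewrite E; reflexivity).
    apply (varietyListing_cells h Hh j _ Hj (frac_part_bounds _)), Hn.
  - intros HJ; apply HJ, inJ_iff; split; [apply frac_part_bounds|].
    rewrite factorAt_code, code_length; reflexivity.
Qed.

Lemma varietyListing_frequency h j : varietyListing theta (fold_right Nat.add 0%nat P) P h ->
  (j <= length P)%nat -> hasFrequency theta (fold_right Nat.add 0%nat P) P (h j) (q (S j) - q j).
Proof.
  intros Hh Hj; unfold hasFrequency, occCount.
  eapply Un_cv_ext; [|apply (bounded_discrepancy_cv _ _ (fold_right Nat.add 0%nat P)
                             (cell_discrepancy j Hj))].
  intros N; simpl; rewrite INR_length_filter; f_equal; apply rsum_ext; intros n _.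
  symmetry; apply (in_cell_indicator j _ _ Hj).
  rewrite profile_factorAt, <- (varietyListing_cells h Hh j) by (auto using frac_part_bounds).
  destruct list_eq_dec as [E|E]; split; congruence.
Qed.

End Cells.

Theorem mainTheorem8 (theta : R) (m : nat) (P : list nat)
  (Htheta : 0 < theta < 1) (Hirr : irrational theta)
  (Hk : (1 <= length P)%nat) (Hkm : (length P <= m)%nat)
  (HP : orderedPartition m P)
  (q : nat -> R) (Hq : sortedPoints theta P q) :
  (exists h, varietyListing theta m P h) /\
  (forall h, varietyListing theta m P h ->
     forall j, (j <= length P)%nat ->
       (forall u, inLang theta m u ->
          (heightProfile P u = h j <-> J_sub theta u (q j) (q (S j)))) /\
       (forall n : nat,
          (heightProfile P (factorAt theta m n) = h j <->
           q j <= fracR (INR n * theta) < q (S j))) /\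
       hasFrequency theta m P (h j) (q (S j) - q j)).
Proof.
  (* Irrationality only serves to make the points {-s_l θ} distinct, which [Hq]
     already asserts. *)
  destruct HP as [_ Hm]; subst m.
  split; [exact (varietyListing_exists theta Htheta P q Hq)|].
  intros h Hh j Hj; split; [|split].
  - intros u; exact (varietyListing_J_sub theta Htheta P q Hq h j u Hh Hj).
  - intros n; rewrite profile_factorAt.
    exact (varietyListing_cells theta Htheta P q Hq h Hh j _ Hj (frac_part_bounds _)).
  - exact (varietyListing_frequency theta Htheta P q Hq h j Hh Hj).
Qed.
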